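(* The Recursive Measure satisfies the added-NO-blocker postulate. For every SVG $\mathcal{G}=(N,\mathcal{W})$ and all $i,j\in N$ with $j$ not a dummy in $\mathcal{G}$: $$\frac{RM'^-_i(\mathcal{G})}{RM'^-_j(\mathcal{G})}=\frac{RM'^-_i(\mathcal{G}^N)}{RM'^-_j(\mathcal{G}^N)}.$$
   Context: A simple voting game (SVG) is a pair $\mathcal{G}=(N,\mathcal{W})$ with $N$ a nonempty finite set of players and $\mathcal{W}\subseteq 2^N$ monotone, $\emptyset\notin\mathcal{W}$, $N\in\mathcal{W}$. Divisions are identified with their YES-sets. Decisiveness and success: - Player $k$ is YES-decisive in $S$ if $k\in S\in\mathcal{W}$ and $S\setminus\{k\}\notin\mathcal{W}$. - Player $k$ is NO-decisive in $S$ if $k\notin S\notin\mathcal{W}$ and $S\cup\{k\}\in\mathcal{W}$. - A dummy is never decisive. - Player $k$ is successful in $S$ if ($k\in S\in\mathcal{W}$) or ($k\notin S\notin\mathcal{W}$). Loyal children: if $S\in\mathcal{W}$, they are the sets $S\setminus\{m\}\in\mathcal{W}$ with $m\in S$. If $S\notin\mathcal{W}$, they are the sets $S\cup\{m\}\notin\mathcal{W}$ with $m\notin S$. Recursive efficacy score $\alpha_k(S)$: - $\alpha_k(S)=1$ if $k$ is decisive; - $\alpha_k(S)=0$ if $k$ is not successful; - otherwise, the average of $\alpha_k$ over the loyal children. For a game with $m$ players, the a priori RM NO-power is $RM'^-_k=2^{-m}\sum_{S\not\ni k}\alpha_k(S)$. For a new player $0\notin N$, the added-NO-blocker game is $\mathcal{G}^N=(N\cup\{0\},\{S\cup\{0\}:S\subseteq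 N\}\cup\mathcal{W})$. *)

From mathcomp Require Import all_boot all_order all_algebra.
Set Implicit Arguments. Unset Strict Implicit. Unset Printing Implicit Defensive.
Import Order.TTheory GRing.Theory Num.Theory.
Local Open Scope ring_scope.

(* A simple voting game on a finite player type T is given by its
   characteristic predicate W of winning coalitions (YES-sets). *)
Definition monotone_game (T : finType) (W : {set T} -> bool) : Prop :=
  forall S U : {set T}, S \subset U -> W S -> W U.

Definition is_SVG (T : finType) (W : {set T} -> bool) : Prop :=
  [/\ monotone_game W, ~~ W set0 & W setT].

Section Decisive.
Variables (T : finType) (W : {set T} -> bool).

Definition yes_decisive (k : T) (S : {set T}) : bool :=
  [&& k \in S, W S & ~~ W (S :\ k)].
Definition no_decisive (k : T) (S : {set T}) : bool :=
  [&& k \notin S, ~~ W S & W (S :|: [set k])].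
Definition decisive (k : T) (S : {set T}) : bool :=
  yes_decisive k S || no_decisive k S.
Definition successful (k : T) (S : {set T}) : bool :=
  ((k \in S) && W S) || ((k \notin S) && ~~ W S).

Definition dummy (k : T) : Prop :=
  forall S : {set T}, W (S :|: [set k]) = W (S :\ k).

(* loyal children of S, indexed by the player m that changes vote *)
Definition loyal_idx (S : {set T}) : {set T} :=
  if W S then [set m in S | W (S :\ m)]
  else [set m in ~: S | ~~ W (S :|: [set m])].

Definition loyal_child (S : {set T}) (m : T) : {set T} :=
  if W S then S :\ m else S :|: [set m].

(* Recursive efficacy score, computed with fuel; fuel #|T|.+1 suffices
   since each recursive step strictly decreases #|S| (winning S) or
   #|~: S| (losing S), and the recursion stops at a decisive k. *)
Fixpoint alpha_fuel (n : nat) (k : T) (S : {set T}) : rat :=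
  match n with
  | 0 => 0
  | n'.+1 =>
    if decisive k S then 1
    else if ~~ successful k S then 0
    else (\sum_(m in loyal_idx S) alpha_fuel n' k (loyal_child S m))
           / (#|loyal_idx S|)%:R
  end.

Definition alpha (k : T) (S : {set T}) : rat := alpha_fuel #|T|.+1 k S.

Definition RMneg (k : T) : rat :=
  (\sum_(S : {set T} | k \notin S) alpha k S) / (2 ^ #|T|)%:R.

End Decisive.

(* the added-NO-blocker game on players option T, new player None *)
Definition added_no_blocker (T : finType) (W : {set T} -> bool)
  : {set option T} -> bool :=
  fun S => (None \in S) || W [set x : T | Some x \in S].

From mathcomp Require Import all_boot all_order all_algebra.
Import Order.TTheory GRing.Theory Num.Theory.
Local Open Scope ring_scope.

(* Every coalition of G^N either contains the blocker 0, and is then winning,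
   or is the copy of a coalition S of G with the same outcome.  A player
   outside a winning coalition has score 0, and on losing coalitions the
   recursion of G^N only ever adds old players (adding 0 would win), so it
   replays the recursion of G.  Hence each pair {S, S + 0} of G^N contributes
   exactly alpha_k(S), while there are twice as many coalitions: the NO-power
   of every old player is halved, and ratios are preserved. *)

Lemma divf_div2r (F : fieldType) (a b c : F) : c != 0 -> (a / c) / (b / c) = a / b.
Proof.
move=> c0; rewrite invfM invrK mulrCA -!mulrA mulVf // mulr1.
by rewrite mulrC.
Qed.

Section Score.
Variables (T : finType) (W : {set T} -> bool) (k : T).

Lemma alpha_fuel_winning_notin n (S : {set T}) :
  W S -> k \notin S -> alpha_fuel W n.+1 k S = 0.
Proof.
move=> WS kS /=.
by rewrite /decisive /yes_decisive /no_decisive /successful WS (negbTE kS).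
Qed.

(* On a losing coalition each step removes a player from the complement,
   so any fuel exceeding #|~: S| gives the same value. *)
Lemma alpha_fuel_losing_stable n m (S : {set T}) :
  ~~ W S -> (#|~: S| < n)%N -> (#|~: S| < m)%N ->
  alpha_fuel W n k S = alpha_fuel W m k S.
Proof.
elim: n m S => [|n IH] [|m] S WS //= ltn ltm.
case: (decisive W k S) => //; case: (successful W k S) => //=.
congr (_ / _); apply: eq_bigr => x.
rewrite /loyal_idx /loyal_child (negbTE WS) inE => /andP [xS WSx].
have lt_compl : (#|~: (S :|: [set x])| < #|~: S|)%N.
  by rewrite setCU -setDE [X in (_ < X)%N](cardsD1 x) xS.
by apply: IH => //; apply: leq_trans lt_compl _.
Qed.

End Score.

Section AddedNoBlocker.
Variables (T : finType) (W : {set T} -> bool).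

Local Notation G := (added_no_blocker W).

Lemma None_notin_imset_Some (S : {set T}) : None \notin Some @: S.
Proof. by apply/imsetP => -[]. Qed.

Lemma added_no_blocker_imset_Some (S : {set T}) : G (Some @: S) = W S.
Proof.
rewrite /added_no_blocker (negbTE (None_notin_imset_Some S)).
by congr W; apply/setP => x; rewrite inE mem_imset //; exact: Some_inj.
Qed.

Lemma added_no_blocker_None (S : {set option T}) : None \in S -> G S.
Proof. by rewrite /added_no_blocker => ->. Qed.

Lemma loyal_idx_added_no_blocker_losing (S : {set T}) : ~~ W S ->
  loyal_idx G (Some @: S) = Some @: loyal_idx W S.
Proof.
move=> WS; rewrite /loyal_idx added_no_blocker_imset_Some (negbTE WS).
have inj : injective (@Some T) by exact: Some_inj.
apply/setP => -[x|]; rewrite !inE.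
  by rewrite -imset_set1 -imsetU added_no_blocker_imset_Some !mem_imset // !inE.
rewrite added_no_blocker_None ?inE ?eqxx ?orbT // andbF.
exact/esym/negbTE/None_notin_imset_Some.
Qed.

Lemma alpha_fuel_added_no_blocker_losing k n (S : {set T}) : ~~ W S ->
  alpha_fuel G n (Some k) (Some @: S) = alpha_fuel W n k S.
Proof.
elim: n S => [|n IH] S WS //=.
have inj : injective (@Some T) by exact: Some_inj.
rewrite /decisive /yes_decisive /no_decisive /successful.
rewrite -imset_set1 -imsetU !added_no_blocker_imset_Some !mem_imset //.
rewrite (negbTE WS) /= !andbF /=.
case: ifP => // _; case: ifP => // _.
rewrite loyal_idx_added_no_blocker_losing // card_imset //; congr (_ / _).
rewrite big_imset /=; last by move=> x y _ _; exact: inj.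
apply: eq_bigr => x; rewrite /loyal_idx /loyal_child (negbTE WS).
rewrite added_no_blocker_imset_Some (negbTE WS) inE => /andP [_ WSx].
by rewrite -imset_set1 -imsetU IH.
Qed.

Definition with_blocker (p : {set T} * bool) : {set option T} :=
  Some @: p.1 :|: (if p.2 then [set None] else set0).

Lemma with_blocker_bij : bijective with_blocker.
Proof.
have inj : injective (@Some T) by exact: Some_inj.
exists (fun S : {set option T} => ([set x | Some x \in S], None \in S)).
  move=> [S b]; rewrite /with_blocker /=; congr pair.
    by apply/setP => x; case: b; rewrite !inE mem_imset // ?inE ?orbF.
  by case: b; rewrite !inE ?eqxx ?orbT // orbF (negbTE (None_notin_imset_Some S)).
move=> S; apply/setP => -[x|]; rewrite /with_blocker !inE.
  by rewrite mem_imset ?inE //; case: ifP; rewrite ?inE ?orbF.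
by case: ifP => HN; rewrite ?inE ?eqxx ?orbT // orbF (negbTE (None_notin_imset_Some _)).
Qed.

Lemma alpha_added_no_blocker_pair k (S : {set T}) : k \notin S ->
  alpha G (Some k) (Some @: S :|: [set None]) + alpha G (Some k) (Some @: S) =
  alpha W k S.
Proof.
move=> kS; have kSS : Some k \notin Some @: S by rewrite mem_imset //; exact: Some_inj.
have GSN : G (Some @: S :|: [set None]) by rewrite added_no_blocker_None // !inE eqxx orbT.
have kSN : Some k \notin Some @: S :|: [set None] by rewrite !inE negb_or kSS.
rewrite /alpha card_option alpha_fuel_winning_notin // add0r.
case WS: (W S).
  by rewrite !alpha_fuel_winning_notin ?added_no_blocker_imset_Some.
rewrite alpha_fuel_added_no_blocker_losing ?WS //.
have le_compl : (#|~: S| <= #|T|)%N by exact: max_card.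
by apply: alpha_fuel_losing_stable; rewrite ?WS // ltnS // leqW.
Qed.

Lemma RMneg_added_no_blocker k : RMneg G (Some k) = RMneg W k / 2.
Proof.
rewrite /RMneg (reindex with_blocker) /=; last exact: onW_bij with_blocker_bij.
have notin_with_blocker (p : {set T} * bool) :
    (Some k \notin with_blocker p) = (k \notin p.1) && true.
  case: p => S b; rewrite /with_blocker /= andbT !inE mem_imset; last exact: Some_inj.
  by case: b; rewrite ?inE ?orbF.
rewrite (eq_bigl _ _ notin_with_blocker).
rewrite -(pair_big (fun S : {set T} => k \notin S) predT
                   (fun S b => alpha G (Some k) (with_blocker (S, b)))).
rewrite [in LHS](eq_bigr (alpha W k)); last first.
  move=> S kS; rewrite big_bool -(alpha_added_no_blocker_pair _ _ kS).
  by rewrite [with_blocker (S, false)]/with_blocker setU0.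
by rewrite card_option expnS natrM invfM mulrA mulrAC.
Qed.

End AddedNoBlocker.

Theorem lemma4 (T : finType) (W : {set T} -> bool) (i j : T) :
  is_SVG W -> ~ dummy W j ->
  RMneg W i / RMneg W j =
  RMneg (added_no_blocker W) (Some i) / RMneg (added_no_blocker W) (Some j).
Proof.
(* The halving holds for every game. *)
move=> _ _.
by rewrite !RMneg_added_no_blocker [RHS]divf_div2r.
Qed.
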